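(* For any constant $\alpha\ge1$, the class of parity functions is exactly learnable under $\alpha$-log-Lipschitz distributions.
   Context: Parity functions on $\{0,1\}^n$ are $f_I(x)=\left(\sum_{i\in I}x_i\right)\bmod 2$ for $I\subseteq[n]$. A distribution $D$ on $\{0,1\}^n$ is $\alpha$-log-Lipschitz if $|\log D(x)-\log D(x')|\le\log\alpha$ whenever $x,x'$ differ in exactly one bit. Exact learnability under a class of distributions means: there is an algorithm which, for every $n$, every target parity $c$, every distribution $D$ in the class and every $\delta>0$, given a number of i.i.d. examples from $D$ labelled by $c$ that is polynomial in $n$ and $1/\delta$, outputs with probability at least $1-\delta$ a hypothesis $h$ with $h(x)=c(x)$ for all $x\in\{0,1\}^n$. *)

From HB Require Import structures.
From mathcomp Require Import all_boot all_order all_algebra.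
From mathcomp Require Import all_classical all_reals all_analysis.
Set Implicit Arguments. Unset Strict Implicit. Unset Printing Implicit Defensive.
Import Order.TTheory GRing.Theory Num.Theory.
Local Open Scope ring_scope.

Definition cube (n : nat) : finType := {ffun 'I_n -> bool}.

Definition parity (n : nat) (I : {set 'I_n}) (x : cube n) : bool :=
  odd (\sum_(i in I) (x i : nat))%N.

Definition hamming1 (n : nat) (x x' : cube n) : bool :=
  #|[set i | x i != x' i]| == 1%N.

Definition is_distr (R : realType) (n : nat) (D : cube n -> R) : Prop :=
  (forall x, 0 <= D x) /\ \sum_(x : cube n) D x = 1.

(* Since log 0 = -oo, this forces D to be everywhere positive; we make this
   explicit (mathcomp-analysis' [ln] is 0 on nonpositive arguments). *)
Definition log_lipschitz (R : realType) (alpha : R) (n : nat) (D : cube n -> R) : Prop :=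
  (forall x, 0 < D x) /\
  (forall x x', hamming1 x x' -> `|ln (D x) - ln (D x')| <= ln alpha).

(* A (deterministic) learner: given n, the confidence delta and a sequence of
   labelled examples, outputs a hypothesis on {0,1}^n. *)
Definition learner (R : realType) : Type :=
  forall n : nat, R -> seq (cube n * bool) -> cube n -> bool.

Definition success_prob (R : realType) (A : learner R) (n m : nat) (delta : R)
    (D : cube n -> R) (I : {set 'I_n}) : R :=
  \sum_(s : m.-tuple (cube n))
     (\prod_(i < m) D (tnth s i)) *
     ([forall x : cube n,
         A n delta [seq (y, parity I y) | y <- s] x == parity I x] : bool)%:R.

From HB Require Import structures.
From mathcomp Require Import all_boot all_order all_algebra.
From mathcomp Require Import all_classical all_reals all_analysis.
From mathcomp Require Import lra.
Import Order.TTheory GRing.Theory Num.Theory.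
Set Implicit Arguments. Unset Strict Implicit.
Local Open Scope ring_scope.

(* A learner that outputs any parity consistent with its sample fails only if
   some f_J with J <> I agrees with the target on every example.  Flipping a bit
   i on which I and J differ maps the agreement set of f_J and f_I into its
   complement, while log-Lipschitzness gives D y <= alpha * D (flip_i y); hence
   the agreement set has mass at most q = alpha / (1 + alpha) < 1.  A union bound
   over the 2^n sets J bounds the failure probability by 2^n q^m, and Bernoulli's
   inequality gives q^N <= 1/2 for N = floor alpha + 1, so that
   m = N (n + floor (1/delta)) examples suffice. *)

Lemma card_sets (T : finType) : #|{set T}| = (2 ^ #|T|)%N.
Proof. by rewrite -[#|T|]cardsT -card_powerset powersetT cardsT. Qed.

Lemma sum_tuple_prod (R : comPzSemiRingType) (T : finType) m (F : T -> R) :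
  \sum_(s : m.-tuple T) \prod_(i < m) F (tnth s i) = (\sum_x F x) ^+ m.
Proof.
rewrite -[in RHS](card_ord m) -prodr_const bigA_distr_bigA /=.
rewrite (reindex (fun f : {ffun 'I_m -> T} => [tuple f i | i < m])) /=.
  by apply: eq_bigr => f _; apply: eq_bigr => i _; rewrite tnth_mktuple.
exists (fun s : m.-tuple T => [ffun i => tnth s i]) => s _.
  by apply/ffunP => i; rewrite ffunE tnth_mktuple.
by apply: eq_from_tnth => i; rewrite tnth_mktuple ffunE.
Qed.

Lemma exists_mem_neq (T : finType) (A B : {set T}) :
  A != B -> exists x, (x \in A) != (x \in B).
Proof.
move=> neqAB; apply/existsP; apply: contraNT neqAB => /existsPn eqAB.
by apply/eqP/setP => x; apply/eqP/negPn/eqAB.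
Qed.

Definition flip_bit n (i : 'I_n) (y : cube n) : cube n :=
  [ffun j => (j == i) (+) y j].

Lemma flip_bitK n (i : 'I_n) : involutive (flip_bit i).
Proof. by move=> y; apply/ffunP => j; rewrite !ffunE addbA addbb. Qed.

Lemma hamming1_flip_bit n (i : 'I_n) y : hamming1 y (flip_bit i y).
Proof.
rewrite /hamming1 (_ : [set j | _] = [set i]) ?cards1 //.
by apply/setP => j; rewrite !inE ffunE; case: (j == i); case: (y j).
Qed.

Lemma parity_flip_bit n (I : {set 'I_n}) i y :
  parity I (flip_bit i y) = (i \in I) (+) parity I y.
Proof.
have flip_off j : j != i -> (flip_bit i y j : nat) = y j.
  by rewrite ffunE => /negbTE->.
rewrite /parity; case: (boolP (i \in I)) => iI; last first.
  congr odd; apply: eq_bigr => j jI.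
  by rewrite flip_off //; apply: contraNneq iI => <-.
rewrite !(bigD1 i iI) /= ffunE eqxx !oddD.
rewrite (eq_bigr (fun j => y j : nat)) => [|j /andP[_]]; last exact: flip_off.
by case: (y i) => /=; rewrite ?negbK.
Qed.

Section Distributions.
Variables (R : realType) (n : nat) (D : cube n -> R).
Hypothesis D_distr : is_distr D.

Lemma log_lipschitz_le (alpha : R) : 0 < alpha -> log_lipschitz alpha D ->
  forall x x', hamming1 x x' -> D x <= alpha * D x'.
Proof.
move=> alpha_gt0 [D_gt0 D_lip] x x' /D_lip /(le_trans (ler_norm _)).
by rewrite lerBlDr -lnM ?posrE // ler_ln ?posrE ?mulr_gt0.
Qed.

Lemma flip_disjoint_mass_le (alpha : R) (i : 'I_n) (E : pred (cube n)) :
  0 <= alpha -> (forall y, D y <= alpha * D (flip_bit i y)) ->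
  (forall y, E y -> ~~ E (flip_bit i y)) ->
  \sum_(y | E y) D y <= alpha / (1 + alpha).
Proof.
move=> alpha_ge0 D_le E_flip; have [D_ge0 D_sum1] := D_distr.
have mass_flip : \sum_(y | E y) D (flip_bit i y) <= \sum_(y | ~~ E y) D y.
  rewrite (reindex_inj (inv_inj (flip_bitK i))) /=.
  rewrite big_mkcond [X in _ <= X]big_mkcond.
  apply: ler_sum => y _; rewrite flip_bitK.
  have [/E_flip|_] := boolP (E (flip_bit i y)); first by rewrite flip_bitK => ->.
  by case: ifP.
have mass_compl : \sum_(y | ~~ E y) D y = 1 - \sum_(y | E y) D y.
  by move: D_sum1; rewrite (bigID E) /=; lra.
have mass_le : \sum_(y | E y) D y <= alpha * (1 - \sum_(y | E y) D y).
  rewrite -mass_compl; apply: le_trans (ler_wpM2l alpha_ge0 mass_flip).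
  by rewrite mulr_sumr; apply: ler_sum => y _.
rewrite ler_pdivlMr; lra.
Qed.

Lemma agreement_mass_le (alpha : R) (I J : {set 'I_n}) :
  0 < alpha -> log_lipschitz alpha D -> J != I ->
  \sum_(x | parity J x == parity I x) D x <= alpha / (1 + alpha).
Proof.
move=> alpha_gt0 D_lip /exists_mem_neq[i iJI].
apply: (flip_disjoint_mass_le (i := i) (ltW alpha_gt0)).
  by move=> y; apply: log_lipschitz_le (hamming1_flip_bit i y).
move=> y; rewrite !parity_flip_bit.
by case: (i \in J) (i \in I) (parity J y) (parity I y) iJI => [] [] [] [].
Qed.

End Distributions.

(* The default is never used on samples labelled by a parity. *)
Definition consistent_learner {R : realType} : learner R := fun n _ S =>
  let consistent J := all (fun p => parity J p.1 == p.2) S in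
  parity (odflt finset.set0 [pick J : {set 'I_n} | consistent J]).

Lemma consistent_learnerP (R : realType) n (delta : R) (I : {set 'I_n}) s :
  exists2 J : {set 'I_n}, all (fun y => parity J y == parity I y) s &
    consistent_learner delta [seq (y, parity I y) | y <- s] = parity J.
Proof.
rewrite /consistent_learner; case: pickP => [J | no_pick].
  by rewrite all_map; exists J.
have := no_pick I; rewrite all_map => /negbT/negP[].
by apply/allP => y _; exact: eqxx.
Qed.

Section ConsistentLearner.
Variables (R : realType) (n m : nat) (delta : R) (I : {set 'I_n}).

Lemma consistent_learner_fail_le (s : m.-tuple (cube n)) :
  (1 : R) - [forall x, consistent_learner delta [seq (y, parity I y) | y <- s] x
                       == parity I x]%:R
  <= \sum_(J | J != I) \prod_(i < m) (parity J (tnth s i) == parity I (tnth s i))%:R.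
Proof.
have agree_ge0 J :
    0 <= \prod_(i < m) (parity J (tnth s i) == parity I (tnth s i))%:R :> R.
  by apply: prodr_ge0 => i _; apply: ler0n.
have [J consistentJ ->] := consistent_learnerP delta I s.
have [->|neqJI] := eqVneq J I.
  by rewrite (introT forallP) // subrr; apply: sumr_ge0.
rewrite (bigD1 J neqJI) /= big1 => [|i _]; last first.
  by move/allP: consistentJ => /(_ _ (mem_tnth i s)) ->.
by rewrite lerBlDr -addrA lerDl addr_ge0 ?ler0n ?sumr_ge0.
Qed.

Lemma consistent_learner_success_ge (D : cube n -> R) : is_distr D ->
  1 - \sum_(J | J != I) (\sum_(x | parity J x == parity I x) D x) ^+ m
  <= success_prob consistent_learner m delta D I.
Proof.
move=> [D_ge0 D_sum1]; pose P (s : m.-tuple (cube n)) := \prod_(i < m) D (tnth s i).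
have P_sum1 : \sum_s P s = 1 by rewrite sum_tuple_prod D_sum1 expr1n.
have agreement_pow J : (\sum_(x | parity J x == parity I x) D x) ^+ m =
    \sum_s P s * \prod_(i < m) (parity J (tnth s i) == parity I (tnth s i))%:R.
  rewrite big_mkcond -sum_tuple_prod; apply: eq_bigr => s _; rewrite -big_split.
  by apply: eq_bigr => i _ /=; case: eqP; rewrite ?mulr1 ?mulr0.
rewrite lerBlDr -lerBlDl -[X in X - _]P_sum1 -sumrB.
under [X in _ <= X]eq_bigr do rewrite agreement_pow.
rewrite exchange_big /=; apply: ler_sum => s _.
rewrite /P -[X in X - _]mulr1 -mulrBr -mulr_sumr ler_wpM2l ?prodr_ge0 //.
exact: consistent_learner_fail_le.
Qed.

End ConsistentLearner.

Lemma bernoulli_ineq (R : realDomainType) (x : R) k :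
  0 <= x -> 1 + k%:R * x <= (1 + x) ^+ k.
Proof.
move=> x_ge0; elim: k => [|k IHk]; first by rewrite mul0r addr0.
have := ler0n R k; rewrite exprS -natr1; nra.
Qed.

Lemma ratio_pow_le_half (R : archiRealFieldType) (alpha : R) :
  1 <= alpha -> (alpha / (1 + alpha)) ^+ (Num.truncn alpha).+1 <= 2^-1.
Proof.
move=> alpha_ge1; have alpha_gt0 : 0 < alpha by lra.
have -> : alpha / (1 + alpha) = (1 + alpha^-1)^-1.
  rewrite -[1 + alpha^-1](mulfK (lt0r_neq0 alpha_gt0)) mulrDl mulVf ?gt_eqF //.
  by rewrite invf_div addrC mul1r.
rewrite exprVn lef_pV2 ?posrE ?exprn_gt0 ?ltr0n ?addr_gt0 ?invr_gt0 //.
have alphaV_ge0 : 0 <= alpha^-1 by rewrite invr_ge0 ltW.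
apply: le_trans (bernoulli_ineq _ alphaV_ge0).
have /andP[_ alpha_lt] := truncn_itv (ltW alpha_gt0).
by rewrite -[2]/(1 + 1) lerD2l ler_pdivlMr // mul1r ltW.
Qed.

Lemma geometric_union_bound (R : archiRealFieldType) (q delta : R) n k :
  0 <= q -> q ^+ k <= 2^-1 -> 0 < delta ->
  2 ^+ n * q ^+ (k * (n + Num.truncn delta^-1)) <= delta.
Proof.
move=> q_ge0 qk_le delta_gt0; set t := Num.truncn delta^-1.
have half_pow : 2 ^+ n * 2^-1 ^+ (n + t) = 2^-1 ^+ t :> R.
  by rewrite exprD mulrA -exprMn mulfV ?pnatr_eq0 // expr1n mul1r.
rewrite exprM; apply: le_trans (_ : 2 ^+ n * 2^-1 ^+ (n + t) <= _).
  by rewrite ler_wpM2l ?exprn_ge0 // lerXn2r ?nnegrE ?exprn_ge0 ?invr_ge0.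
have deltaV_ge0 : 0 <= delta^-1 by rewrite invr_ge0 ltW.
have /andP[_ delta_lt] := truncn_itv deltaV_ge0.
rewrite half_pow exprVn -[delta]invrK lef_pV2 ?posrE ?exprn_gt0 ?invr_gt0 //.
by apply: le_trans (ltW delta_lt) _; rewrite -natrX ler_nat ltn_expl.
Qed.

Theorem theorem5p1 (R : realType) (alpha : R) (halpha : 1 <= alpha) :
  exists (A : learner R) (m : nat -> R -> nat),
    (exists (c : R) (k : nat), forall (n : nat) (delta : R), 0 < delta ->
        (m n delta)%:R <= c * (n%:R + delta^-1) ^+ k) /\
    forall (n : nat) (I : {set 'I_n}) (D : cube n -> R) (delta : R),
      is_distr D -> log_lipschitz alpha D -> 0 < delta ->
      1 - delta <= success_prob A (m n delta) delta D I.
Proof.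
set N := (Num.truncn alpha).+1.
exists consistent_learner, (fun n delta => N * (n + Num.truncn delta^-1))%N; split.
  exists N%:R, 1%N => n delta delta_gt0.
  rewrite expr1 natrM natrD ler_wpM2l // lerD2l.
  have deltaV_ge0 : 0 <= delta^-1 by rewrite invr_ge0 ltW.
  by have /andP[] := truncn_itv deltaV_ge0.
move=> n I D delta D_distr D_lip delta_gt0.
set m := (N * _)%N; have alpha_gt0 : 0 < alpha by lra.
set q := alpha / (1 + alpha); have q_ge0 : 0 <= q by rewrite divr_ge0 ?addr_ge0 ?ltW.
apply: le_trans (consistent_learner_success_ge _ delta I D_distr).
rewrite lerD2l lerN2.
apply: le_trans (geometric_union_bound n q_ge0 (ratio_pow_le_half halpha) delta_gt0).
apply: le_trans (_ : \sum_(J : {set 'I_n}) q ^+ m <= _); last first.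
  by rewrite sumr_const card_sets card_ord mulrC -natrX mulr_natr.
rewrite [X in _ <= X](bigD1 I) //=; apply: ler_wpDl; first exact: exprn_ge0.
apply: ler_sum => J neqJI; rewrite lerXn2r ?nnegrE //; last exact: agreement_mass_le.
by apply: sumr_ge0 => x _; case: D_distr.
Qed.
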